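(* $\displaystyle\min_{\underline y\in\mathcal F}\sum_{j\in\tilde R}c_jy_j\ge\min_{\underline x\in\mathcal F_0}\sum_{j\in\tilde R}c_jx_j$.
   Context: Let $G=(V,E)$ be a finite undirected graph with $V=Q\cup R\cup B$ (pairwise disjoint), where $Q$ is the set of sources, $R$ the set of potential relay locations and $B$ the set of potential sink locations; let $h_{\max}$ be a positive integer and $c_s,c_r\ge0$. Form the augmented graph $\tilde G=(\tilde V,\tilde E)$ with $\tilde V=V\cup\{0\}$, where $0$ is a new vertex (virtual sink), and $\tilde E=E\cup\{\{0,b\}:b\in B\}$. Let $\tilde R=R\cup B$ with node costs $c_j=c_r$ for $j\in R$ and $c_j=c_s$ for $j\in B$. For a source $k\in Q$, a node cut for $k$ is a set $\gamma\subseteq\tilde V\setminus\{k,0\}$ whose deletion disconnects $k$ from $0$ in $\tilde G$; it is minimal if no proper subset is a node cut; $\Gamma^k$ denotes the set of minimal node cuts for $k$. A vector $\underline y=((y_{j,k})_{k\in Q,\,j\in\tilde V\setminus\{k,0\}},(y_j)_{j\in\tilde R})$ belongs to $\mathcal F$ iff: (i) $\sum_{j\in\gamma}y_{j,k}\ge1$ for all $\gamma\in\Gamma^k$, $k\in Q$; (ii) $y_j\ge y_{j,k}$ for all $j\in\tilde R$, $k\in Q$; (iii) $\sum_{j\in\tilde V\setminus\{k,0\}}y_{j,k}\le h_{\max}$ for all $k\in Q$; (iv) all $y_{j,k},y_j\in\{0,1\}$. For $k\in Q$ let $\mathcal P'_k$ be the set of paths in $\tilde G$ from $k$ to $0$ with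 at most $h_{\max}+1$ edges, and let $\mathcal U_0$ be the set of tuples $\underline g=(p_k)_{k\in Q}$ with $p_k\in\mathcal P'_k$. For $\underline g\in\mathcal U_0$ define $\underline x(\underline g)$ by $x_{j,k}=1$ if $j$ is a vertex of $p_k$ and $0$ otherwise ($k\in Q$, $j\in\tilde V\setminus\{k,0\}$), and $x_j=1$ if $x_{j,k}=1$ for some $k\in Q$ and $0$ otherwise ($j\in\tilde R$). Let $\mathcal F_0=\{\underline x(\underline g):\underline g\in\mathcal U_0\}$. A minimum over an empty set is taken to be $+\infty$. *)

(* with MathComp-Analysis extended reals for the minima
   (ereal_inf of the empty set is +oo, matching "min over empty = +oo"). *)
From HB Require Import structures.
From mathcomp Require Import all_boot all_order all_algebra.
From mathcomp Require Import classical_sets reals constructive_ereal ereal.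
Set Implicit Arguments. Unset Strict Implicit. Unset Printing Implicit Defensive.
Import Order.TTheory GRing.Theory Num.Theory.
Local Open Scope classical_set_scope.
Local Open Scope ring_scope.

(* The augmented vertex set  V~ = V ∪ {0}  is  option V,  None = virtual sink 0. *)
Section Network.
Variable V : finType.
Variable e : rel V.
Variables (Q Rl B : {set V}).       (* sources, relay locations, sink locations *)
Variable hmax : nat.

Definition eaug (u v : option V) : bool :=
  match u, v with
  | Some a, Some b => e a b
  | Some a, None => a \in B
  | None, Some b => b \in B
  | None, None => false
  end.

(* index set  V~ \ {k,0}  of the variables y_{j,k} *)
Definition dom (k : V) (j : option V) : bool := (j != Some k) && (j != None).

Definition node_cut (k : V) (g : {set option V}) : bool :=
  [forall j, (j \in g) ==> dom k j] &&
  ~~ connect [rel u v | [&& eaug u v, u \notin g & v \notin g]] (Some k) None.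

Definition min_node_cut (k : V) (g : {set option V}) : bool :=
  minset (node_cut k) g.

Definition Rt : {set V} := Rl :|: B.

(* A 0/1 vector  y = ((y_{j,k}), (y_j)):  [yk y k j] is y_{j,k}  and
   [yr y j] is y_j  (j ∈ R~ ⊆ V).  Entries outside the index sets
   (k ∉ Q, or j ∉ V~\{k,0}, or j ∉ R~) are required to be 0, so that such
   records correspond bijectively to the paper's vectors. *)
Record vec := Vec { yk : V -> option V -> bool; yr : V -> bool }.

Definition wf_vec (y : vec) : Prop :=
  (forall k j, ~~ ((k \in Q) && dom k j) -> yk y k j = false) /\
  (forall j, j \notin Rt -> yr y j = false).

Definition inF (y : vec) : Prop :=
  wf_vec y /\
  (forall k, k \in Q -> forall g, min_node_cut k g ->
       (1 <= \sum_(j in g) yk y k j)%N) /\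
  (forall j k, j \in Rt -> k \in Q -> (yk y k (Some j) <= yr y j)%N) /\
  (forall k, k \in Q -> (\sum_(j | dom k j) yk y k j <= hmax)%N).
(* (iv) integrality is built in: entries are booleans *)

(* p (a sequence of vertices after k) is a path in G~ from k to 0 with
   at most hmax+1 edges: consecutive vertices adjacent, ends at 0,
   no repeated vertex; the number of edges is size p. *)
Definition is_path (k : V) (p : seq (option V)) : bool :=
  [&& path eaug (Some k) p, last (Some k) p == None,
      uniq (Some k :: p) & (size p <= hmax.+1)%N].

Definition xvec (g : V -> seq (option V)) : vec :=
  Vec (fun k j => [&& k \in Q, dom k j & j \in Some k :: g k])
      (fun j => (j \in Rt) && [exists k in Q, Some j \in Some k :: g k]).

Definition inF0 (x : vec) : Prop :=
  exists g : V -> seq (option V),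
    (forall k, k \in Q -> is_path k (g k)) /\ x = xvec g.

End Network.

Definition cost (T : realType) (V : finType) (Rl B : {set V}) (cs cr : T)
    (y : vec V) : T :=
  \sum_(j in Rt Rl B) (if j \in Rl then cr else cs) *+ yr y j.

(** A feasible [y] contains, for every source [k], a path from [k] to the
    virtual sink that only uses vertices [j] with [y_{j,k} = 1]: otherwise the
    vertices with [y_{j,k} = 0] would form a node cut, and a minimal node cut
    inside it would violate the cut constraint (i).  After removing loops, the
    hop constraint (iii) bounds the length of this path by [hmax + 1], so these
    paths form an element of [U_0].  By the linking constraints (ii) every
    vertex they use has [y_j = 1]; as the costs are nonnegative, the induced
    [x] of [F_0] costs at most as much as [y]. *)
From HB Require Import structures.
From mathcomp Require Import all_boot all_order all_algebra.
From mathcomp Require Import classical_sets reals constructive_ereal ereal.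
Set Implicit Arguments. Unset Strict Implicit. Unset Printing Implicit Defensive.
Import Order.TTheory GRing.Theory Num.Theory.
Local Open Scope ring_scope.

Lemma path_all_rhs (T : eqType) (r : rel T) (P : pred T) x p :
  (forall u v, r u v -> P v) -> path r x p -> all P p.
Proof.
move=> rP; elim: p x => [//|a p IHp] x /= /andP[rxa pa].
by rewrite (rP _ _ rxa) (IHp a pa).
Qed.

Lemma uniq_size_le_sum (T : finType) (P b : pred T) (s : seq T) :
  uniq s -> (forall j, j \in s -> P j && b j) -> (size s <= \sum_(j | P j) b j)%N.
Proof.
move=> /card_uniqP <- sPb.
have -> : (\sum_(j | P j) b j = \sum_(j | P j && b j) 1)%N.
  by rewrite big_mkcondr /=; apply: eq_bigr => j _; case: (b j).
by rewrite sum1dep_card; apply/subset_leq_card/fintype.subsetP => j /sPb; rewrite inE.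
Qed.

Section FeasiblePaths.
Variables (V : finType) (e : rel V) (Q Rl B : {set V}) (hmax : nat).

Definition zero_set (y : vec V) (k : V) : {set option V} :=
  [set j | dom k j && ~~ yk y k j].

Lemma inF_node_cut_meets_support y k g :
  inF e Q Rl B hmax y -> k \in Q -> node_cut e B k g ->
  exists2 j, j \in g & yk y k j.
Proof.
move=> [_ [cutF _]] kQ gcut.
have [g0 g0min g0g] := minset_exists gcut.
have /existsP[j /andP[jg0 ykj]] : [exists j in g0, yk y k j].
  apply: contraLR (cutF k kQ g0 g0min) => /existsPn noj.
  rewrite -ltnNge ltnS leqn0; apply/eqP/big1 => j jg0.
  by move: (noj j); rewrite jg0 => /= /negbTE ->.
by exists j => //; apply: (fintype.subsetP g0g).
Qed.

Lemma inF_connect_avoiding_zeros y k :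
  inF e Q Rl B hmax y -> k \in Q ->
  connect [rel u v | [&& eaug e B u v, u \notin zero_set y k
                         & v \notin zero_set y k]] (Some k) None.
Proof.
move=> yF kQ; apply: contraT => disconnected.
have zcut : node_cut e B k (zero_set y k).
  rewrite /node_cut disconnected andbT.
  by apply/forallP => j; apply/implyP; rewrite inE => /andP[].
have [j] := inF_node_cut_meets_support yF kQ zcut.
by rewrite inE => /andP[_ /negbTE ->].
Qed.

Lemma support_path_size (y : vec V) k p :
  uniq (Some k :: p) -> last (Some k) p = None ->
  (forall j, Some j \in p -> yk y k (Some j)) ->
  (size p <= (\sum_(j | dom k j) yk y k j).+1)%N.
Proof.
case/lastP: p => [|q z] //; rewrite last_rcons => /= puniq zN ypos.
move: puniq; rewrite zN rcons_uniq mem_rcons in_cons negb_or.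
case/andP=> /andP[_ kq] /andP[Nq quniq].
rewrite size_rcons ltnS; apply: uniq_size_le_sum => // -[j|] jq; last by rewrite jq in Nq.
rewrite /dom andbT ypos ?mem_rcons ?in_cons ?jq ?orbT // andbT.
by apply: contraNneq kq => <-.
Qed.

Lemma inF_support_path y k :
  inF e Q Rl B hmax y -> k \in Q ->
  exists2 p, is_path e B hmax k p & forall j, Some j \in p -> yk y k (Some j).
Proof.
move=> yF kQ; have [p0 p0path p0last] := connectP (inF_connect_avoiding_zeros yF kQ).
case: (shortenP p0path) p0last => p ppath puniq _ plast.
have pe : path (eaug e B) (Some k) p by apply: sub_path ppath => u v /and3P[].
have pnz : all (fun v => v \notin zero_set y k) p.
  by apply: path_all_rhs ppath => u v /and3P[].
have kp : Some k \notin p by case/andP: puniq.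
have ypos j : Some j \in p -> yk y k (Some j).
  move=> jp; have := allP pnz _ jp; rewrite inE negb_and negbK /dom andbT.
  by case/orP=> // /negP[]; apply: contraNneq kp => <-.
have [_ [_ [_ hopF]]] := yF.
exists p => //; rewrite /is_path pe -plast eqxx puniq /=.
apply: leq_trans (support_path_size puniq (esym plast) ypos) _.
by rewrite ltnS hopF.
Qed.

Lemma inF_support_paths y :
  inF e Q Rl B hmax y ->
  exists g : V -> seq (option V), forall k, k \in Q ->
    is_path e B hmax k (g k) /\ forall j, Some j \in g k -> yk y k (Some j).
Proof.
move=> yF; have /boolp.choice[g gP] : forall k, exists p, k \in Q ->
    is_path e B hmax k p /\ forall j, Some j \in p -> yk y k (Some j).
  move=> k; case kQ: (k \in Q); last by exists [::].
  by have [p ??] := inF_support_path yF kQ; exists p.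
by exists g.
Qed.

Lemma cost_mono (T : realType) (cs cr : T) (x y : vec V) :
  0 <= cs -> 0 <= cr -> (forall j, j \in Rt Rl B -> yr x j <= yr y j)%N ->
  cost Rl B cs cr x <= cost Rl B cs cr y.
Proof.
move=> cs0 cr0 xy; apply: ler_sum => j jR.
have c0 : 0 <= (if j \in Rl then cr else cs) by case: ifP.
by case: (yr x j) (yr y j) (xy j jR) => [] [] // _; rewrite mulr0n mulrn_wge0.
Qed.

Lemma inF_dominated_by_F0 (T : realType) (cs cr : T) y :
  [disjoint Q & Rl] -> [disjoint Q & B] -> 0 <= cs -> 0 <= cr ->
  inF e Q Rl B hmax y ->
  exists2 x, inF0 e Q Rl B hmax x & cost Rl B cs cr x <= cost Rl B cs cr y.
Proof.
move=> dQR dQB cs0 cr0 yF; have [g gP] := inF_support_paths yF.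
exists (xvec Q Rl B g); first by exists g; split=> // k /gP[].
apply: cost_mono => // j jR /=; rewrite jR /=.
case: fintype.existsP => [[k /andP[kQ]]|//]; rewrite in_cons.
case/orP=> [/eqP[jk]|jg].
  by move: jR; rewrite jk inE (disjointFr dQR kQ) (disjointFr dQB kQ).
have [_ [_ [linkF _]]] := yF.
by rewrite -(proj2 (gP k kQ) j jg); apply: linkF.
Qed.

End FeasiblePaths.

Theorem corollary3 (T : realType) (V : finType) (e : rel V)
    (Q Rl B : {set V}) (hmax : nat) (cs cr : T) :
  symmetric e ->
  [disjoint Q & Rl] -> [disjoint Q & B] -> [disjoint Rl & B] ->
  Q :|: Rl :|: B = [set: V] ->
  (0 < hmax)%N -> 0 <= cs -> 0 <= cr ->
  (ereal_inf [set (cost Rl B cs cr y)%:E | y in inF e Q Rl B hmax]%classic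
   >= ereal_inf [set (cost Rl B cs cr x)%:E | x in inF0 e Q Rl B hmax]%classic)%E.
Proof.
move=> _ dQR dQB _ _ _ cs0 cr0.
apply/ereal_infP => _ [y yF <-].
have [x xF0 xy] := inF_dominated_by_F0 dQR dQB cs0 cr0 yF.
by apply: ge_ereal_inf; exists (cost Rl B cs cr x)%:E; [exists x | rewrite lee_fin].
Qed.
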